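(* Let $\underline x=(x_1,\dots,x_m)$, $\underline y=(y_1,\dots,y_m)$ and consider an $L_{K,\theta}$-formula $$\bigwedge_{k=1}^m\zeta_k[\theta](x_k)=\sum_{l=1}^{k-1}Q_{k,l}[\theta](x_l)+y_k$$ with each $\zeta_k\in K[X]$ monic of positive degree and $\deg(Q_{k,l})<\deg(\zeta_l)$ for all $l<k$. Then there are (a) an $L_{K,\theta}$-formula $\bigwedge_{k=1}^n\xi_k[\theta](x'_k)=\mu_k(\underline y)$ in $\underline x'=(x'_1,\dots,x'_n)$ and $\underline y$, with each $\xi_k$ monic of positive degree and each $\mu_k(\underline y)$ an $L_{K,\theta}$-term, and (b) $L_{K,\theta}$-terms $\tau^i_k(\underline x';\underline y)$ ($1\le k\le m$, $i\in\omega$) such that (1) the terms $(\tau^i_k(\underline x';\underline 0):1\le k\le m,\ i<\deg(\zeta_k))$ are linearly independent (as formal $K$-linear combinations of the terms $\theta^j(x'_l)$); (2) for $i\ge\deg(\xi_k)$, $\theta^i(x'_k)$ does not occur in any $\tau^j_l(\underline x';\underline y)$ with $j<\deg(\zeta_l)$; such that in $T_{K\text{-vs},\theta}$: (i) $\bigwedge_{k=1}^m\zeta_k[\theta](x_k)=\sum_{l<k}Q_{k,l}[\theta](x_l)+y_k$ is equivalent to $\exists\underline x':\bigwedge_{k=1}^n\xi_k[\theta](x'_k)=\mu_k(\underline y)\wedge\bigwedge_{k=1}^mx_k=\tau^0_k(\underline x';\underline y)$; (ii) $\bigwedge_{k=1}^n\xi_k[\theta](x'_k)=\mu_k(\underline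 y)$ implies $\tau^i_k(\underline x';\underline y)=\theta^i(\tau^0_k(\underline x';\underline y))$ for all $k\in\{1,\dots,m\}$, $i\in\omega$. Variation 1: if $C$ is a kernel configuration and all irreducible factors $f$ of all $\zeta_k$ satisfy $C(f)=\infty$, then all irreducible factors of all $\xi_k$ satisfy $C(f)=\infty$. Variation 2: let $C$ be a kernel configuration and $f\in K[X]_{\mathrm{irr}}$ with $0<C(f)<\infty$; suppose $\zeta_k=f^{q_k}$ with $0<q_k\le C(f)$ for all $k$, and that $T_{K\text{-vs},\theta}\models\bigwedge_k f^{q_k}[\theta](x_k)=\sum_{l<k}Q_{k,l}[\theta](x_l)+y_k\to\bigwedge_k f^{C(f)}[\theta](x_k)=t_k(\underline y)$ for some $L_{K,\theta}$-terms $t_k$. Then each $\xi_k=f^{q'_k}$ with $0<q'_k\le C(f)$, and for every $(\mathbb V,\theta)\models T_{K\text{-vs},\theta}$ and tuple $\underline u$ in $\mathrm{Ker}(f^{C(f)}[\theta])$ with $t_k(\underline u)=0$ for all $k$, we have $\mu_k(\underline u)\in\mathrm{Ker}(f^{C(f)-q'_k}[\theta])$ for all $k$.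
   Context: $K$ is a field, $K[X]_{\mathrm{irr}}$ the set of monic irreducible polynomials. $T_{K\text{-vs},\theta}$ is the theory of $K$-vector spaces with a $K$-linear endomorphism $\theta$, in the language $L_{K,\theta}=\{0,+,(q\cdot)_{q\in K},\theta\}$. For $\rho=\sum_i(\rho)_iX^i$, $\rho[\theta]=\sum_i(\rho)_i\theta^i$; $\mathrm{Ker}$ denotes kernel. A kernel configuration is $C=(c,d)$ with $c:K[X]_{\mathrm{irr}}\to\mathbb N\cup\{\infty\}$, $d\in\mathbb N_{>0}\cup\{\infty\}$, $d=\infty$ or $d=\sum_f\deg(f)c(f)$; write $C(f)=c(f)$. Every $L_{K,\theta}$-term in variables $\underline x',\underline y$ is equivalent modulo $T_{K\text{-vs},\theta}$ to one of the form $\sum_l\rho_l[\theta](x'_l)+\sum_l\sigma_l[\theta](y_l)$. *)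

From HB Require Import structures.
From mathcomp Require Import all_boot all_order all_algebra.
Set Implicit Arguments. Unset Strict Implicit. Unset Printing Implicit Defensive.
Import GRing.Theory.
Local Open Scope ring_scope.

(* A model of T_{K-vs,theta}: a K-vector space V (lmodType K) with a
   K-linear endomorphism theta : {linear V -> V}. *)

Definition peval (K : fieldType) (V : lmodType K) (th : V -> V)
    (p : {poly K}) (v : V) : V :=
  \sum_(i < size p) p`_i *: iter i th v.

(* Normal form of an L_{K,theta}-term in variables y_1..y_m:
   sum_l sigma_l[theta](y_l), represented by sigma : 'I_m -> {poly K}. *)
Definition yterm (K : fieldType) (m : nat) := 'I_m -> {poly K}.

Definition eval_y (K : fieldType) (V : lmodType K) (th : V -> V) (m : nat)
    (s : yterm K m) (y : 'I_m -> V) : V :=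
  \sum_(l < m) peval th (s l) (y l).

(* Normal form of an L_{K,theta}-term in variables x'_1..x'_n, y_1..y_m:
   sum_l rho_l[theta](x'_l) + sum_l sigma_l[theta](y_l), represented by
   (rho, sigma).  The first component is the formal K-linear combination of
   the terms theta^j(x'_l): coefficient of theta^j(x'_l) is (rho l)`_j. *)
Definition xyterm (K : fieldType) (n m : nat) :=
  (('I_n -> {poly K}) * ('I_m -> {poly K}))%type.

Definition eval_xy (K : fieldType) (V : lmodType K) (th : V -> V) (n m : nat)
    (t : xyterm K n m) (x' : 'I_n -> V) (y : 'I_m -> V) : V :=
  \sum_(l < n) peval th (t.1 l) (x' l) + eval_y th t.2 y.

Definition mirr (K : fieldType) (f : {poly K}) : Prop :=
  f \is monic /\ irreducible_poly f.

Definition pdeg (K : fieldType) (p : {poly K}) : nat := (size p).-1.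

(* Kernel configuration C = (c, d); None stands for infinity.
   c : K[X]_irr -> N u {oo} (values outside K[X]_irr are irrelevant),
   d in N_{>0} u {oo}, and d = oo or d = sum_f deg(f) c(f) (a finite sum:
   all c(f) finite and only finitely many nonzero). *)
Record kconf (K : fieldType) := KConf {
  kc_c : {poly K} -> option nat;
  kc_d : option nat }.

Definition kconf_ok (K : fieldType) (C : kconf K) : Prop :=
  match kc_d C with
  | None => True
  | Some d =>
      (0 < d)%N /\
      exists s : seq {poly K},
        [/\ uniq s, (forall f, f \in s -> mirr f),
            (forall f, mirr f -> f \notin s -> kc_c C f = Some 0%N),
            (forall f, f \in s -> exists e, kc_c C f = Some e) &
            d = \sum_(f <- s) (pdeg f * odflt 0%N (kc_c C f))%N]
  end.

(* The system reads A x = y for the lower triangular polynomial matrix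
   A = sys_mx zeta Q, polynomials acting through theta.  Over the Euclidean
   domain K[X], elementary row and column operations bring A to a diagonal
   D = L A R with L, R invertible, so that x = R z turns the system into the
   decoupled equations d_k(theta) z_k = (L y)_k.  Unit entries d_k determine
   z_k; the others, made monic, give xi_k(theta) x'_k = mu_k(y).  The term
   tau^i_k writes theta^i x_k = ((X^i R) z)_k with every coefficient reduced
   modulo xi_l.  Independence of the tau^i_k comes from the triangular shape
   of A with monic diagonal, Variation 1 from det D = det L * prod zeta_k *
   det R, and Variation 2 from evaluating its hypothesis in the free model
   K[X] (theta = multiplication by X), which gives T A = f^N for the matrix T
   of the terms t_k, hence xi_k | f^N. *)

From HB Require Import structures.
From mathcomp Require Import all_boot all_order all_algebra.
From mathcomp Require Import perm zify.
Import GRing.Theory.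
Local Open Scope ring_scope.

Set Implicit Arguments.
Unset Strict Implicit.
Unset Printing Implicit Defensive.

Section PolyEval.
Variables (K : fieldType) (V : lmodType K) (th : {linear V -> V}).
Implicit Types (p q : {poly K}) (u v : V).

Lemma iter_linear i : linear (iter i th).
Proof. by elim: i => // i IH a u v; rewrite /= IH linearP. Qed.

Lemma peval_is_linear p : linear (peval th p).
Proof.
move=> a u v; rewrite /peval scaler_sumr -big_split; apply: eq_bigr => i _ /=.
by rewrite iter_linear scalerDr !scalerA mulrC.
Qed.

End PolyEval.

HB.instance Definition _ (K : fieldType) (V : lmodType K) (th : {linear V -> V})
  (p : {poly K}) :=
  GRing.isLinear.Build K V V *:%R (peval th p) (peval_is_linear th p).

Section PolyEvalTheory.
Variables (K : fieldType) (V : lmodType K) (th : {linear V -> V}).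
Implicit Types (p q : {poly K}) (u v : V).

Lemma peval_widen n p v : (size p <= n)%N ->
  peval th p v = \sum_(i < n) p`_i *: iter i th v.
Proof.
move=> le_p_n; rewrite /peval (big_ord_widen n (fun i => p`_i *: iter i th v) le_p_n).
rewrite [RHS](bigID (fun i : 'I_n => (i < size p)%N)) /= [X in _ = _ + X]big1 ?addr0 //.
by move=> i; rewrite -leqNgt => le_p_i; rewrite nth_default // scale0r.
Qed.

Lemma peval0 v : peval th 0 v = 0.
Proof. by rewrite /peval size_poly0 big_ord0. Qed.

Lemma pevalD p q v : peval th (p + q) v = peval th p v + peval th q v.
Proof.
set n := maxn (size p) (size q).
rewrite !(@peval_widen n) ?leq_maxl ?leq_maxr ?(leq_trans (size_polyD _ _)) //.
by rewrite -big_split; apply: eq_bigr => i _; rewrite coefD scalerDl.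
Qed.

Lemma pevalZ a p v : peval th (a *: p) v = a *: peval th p v.
Proof.
rewrite !(@peval_widen (size p)) ?size_scale_leq // scaler_sumr.
by apply: eq_bigr => i _; rewrite coefZ scalerA.
Qed.

Lemma pevalN p v : peval th (- p) v = - peval th p v.
Proof. by rewrite -[- p]scaleN1r pevalZ scaleN1r. Qed.

Lemma peval_sum (I : Type) (r : seq I) (P : pred I) (F : I -> {poly K}) v :
  peval th (\sum_(i <- r | P i) F i) v = \sum_(i <- r | P i) peval th (F i) v.
Proof. exact: (big_morph (peval th^~ v) (fun p q => pevalD p q v) (peval0 v)). Qed.

Lemma pevalC a v : peval th a%:P v = a *: v.
Proof. by rewrite (@peval_widen 1) ?size_polyC ?leq_b1 // big_ord1 coefC. Qed.

Lemma peval1 v : peval th 1 v = v.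
Proof. by rewrite pevalC scale1r. Qed.

Lemma peval_comm p v : peval th p (th v) = th (peval th p v).
Proof.
rewrite /peval linear_sum; apply: eq_bigr => i _.
by rewrite linearZ /= -iterSr.
Qed.

Lemma pevalMX p v : peval th (p * 'X) v = peval th p (th v).
Proof.
have [->|p0] := eqVneq p 0; first by rewrite mul0r !peval0.
rewrite /peval size_mulX // big_ord_recl coefMX eqxx scale0r add0r.
by apply: eq_bigr => i _; rewrite coefMX /= -iterSr.
Qed.

Lemma pevalM p q v : peval th (p * q) v = peval th p (peval th q v).
Proof.
elim/poly_ind: p v => [|p a IH] v; first by rewrite mul0r !peval0.
rewrite mulrDl -mulrA (mulrC 'X) mulrA !pevalD !pevalMX IH peval_comm.
by rewrite mul_polyC pevalZ !pevalC.
Qed.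

Lemma peval_Xn i v : peval th 'X^i v = iter i th v.
Proof.
elim: i v => [|i IH] v; first by rewrite expr0 peval1.
by rewrite exprSr pevalMX IH iterSr.
Qed.

Lemma eval_yZ n a (s : yterm K n) y :
  eval_y th (fun l => a *: s l) y = a *: eval_y th s y.
Proof. by rewrite /eval_y scaler_sumr; apply: eq_bigr => l _; rewrite pevalZ. Qed.

Lemma eval_yM n p (s : yterm K n) y :
  eval_y th (fun l => p * s l) y = peval th p (eval_y th s y).
Proof. by rewrite /eval_y linear_sum; apply: eq_bigr => l _; rewrite pevalM. Qed.

Lemma peval_eval_y n p (s : yterm K n) y :
  peval th p (eval_y th s y) = eval_y th s (fun l => peval th p (y l)).
Proof.
by rewrite -eval_yM; apply: eq_bigr => l _; rewrite mulrC pevalM.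
Qed.

End PolyEvalTheory.

Section MxAction.
Variables (K : fieldType) (V : lmodType K) (th : {linear V -> V}).

Definition mx_act n m (P : 'M[{poly K}]_(n, m)) (x : 'I_m -> V) : 'I_n -> V :=
  fun i => eval_y th (fun j => P i j) x.

Lemma mx_act_ext n m (P : 'M_(n, m)) x x' : x =1 x' -> mx_act P x =1 mx_act P x'.
Proof. by move=> eq_x i; apply: eq_bigr => j _; rewrite eq_x. Qed.

Lemma mx_act_mul n m p (P : 'M_(n, m)) (P' : 'M_(m, p)) x :
  mx_act (P *m P') x =1 mx_act P (mx_act P' x).
Proof.
move=> i; rewrite /mx_act /eval_y.
under eq_bigr => j _ do rewrite mxE peval_sum.
rewrite exchange_big /=; apply: eq_bigr => t _.
by rewrite linear_sum; apply: eq_bigr => j _; rewrite pevalM.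
Qed.

Lemma mx_act1 n x : mx_act (1%:M : 'M_n) x =1 x.
Proof.
move=> i; rewrite /mx_act /eval_y (bigD1 i) //= big1 ?addr0.
  by rewrite mxE eqxx peval1.
by move=> j /negPf ji; rewrite mxE eq_sym ji peval0.
Qed.

Lemma mx_act_diag n (P : 'M_n) x : is_diag_mx P ->
  forall i, mx_act P x i = peval th (P i i) (x i).
Proof.
move=> /is_diag_mxP P_diag i; rewrite /mx_act /eval_y (bigD1 i) //= big1 ?addr0 //.
by move=> j ji; rewrite P_diag ?peval0 // eq_sym.
Qed.

Lemma mx_act0 n m (P : 'M_(n, m)) : mx_act P (fun=> 0) =1 (fun=> 0).
Proof. by move=> i; rewrite /mx_act /eval_y big1 // => j _; rewrite linear0. Qed.

Lemma mx_act_unitmxE n (L A R : 'M_n) z y : L \in unitmx ->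
  mx_act (L *m A *m R) z =1 mx_act L y <-> mx_act A (mx_act R z) =1 y.
Proof.
move=> uL; set w := mx_act A (mx_act R z).
have act_LAR : mx_act (L *m A *m R) z =1 mx_act L w.
  by move=> i; rewrite !mx_act_mul.
split => [eq_Ly i | eq_wy i]; last by rewrite act_LAR (mx_act_ext _ eq_wy).
have act_VL u : mx_act (invmx L) (mx_act L u) =1 u.
  by move=> j; rewrite -mx_act_mul mulVmx // mx_act1.
by rewrite -(act_VL w i) -(act_VL y i); apply: mx_act_ext => j; rewrite -act_LAR.
Qed.

End MxAction.

Lemma peval_mulX (K : fieldType) (p v : {poly K}) :
  peval ('X \o* idfun) p v = v * p.
Proof.
have iterX i : iter i ('X \o* idfun) v = v * 'X^i.
  by elim: i => [|i /= ->]; rewrite ?expr0 ?mulr1 // exprSr mulrA.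
rewrite /peval; under eq_bigr => i _ do rewrite iterX scalerAr.
by rewrite -mulr_sumr -poly_def coefK.
Qed.

Lemma scalar_mulmx_of_act (K : fieldType) n (A T : 'M[{poly K}]_n) (g : {poly K}) :
  (forall (V : lmodType K) (th : {linear V -> V}) (x y : 'I_n -> V),
     mx_act th A x =1 y -> forall k, peval th g (x k) = mx_act th T y k) ->
  T *m A = g%:M.
Proof.
move=> act_Ag; apply/matrixP => k j.
pose e i : {poly K} := (i == j)%:R.
have act_e (P : 'M_n) i : mx_act ('X \o* idfun) P e i = P i j.
  rewrite /mx_act /eval_y (bigD1 j) //= big1 ?addr0 => [|l lj].
    by rewrite peval_mulX /e eqxx mul1r.
  by rewrite peval_mulX /e (negPf lj) mul0r.
have := act_Ag _ ('X \o* idfun) e _ (fun _ => erefl) k.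
by rewrite peval_mulX -mx_act_mul act_e !mxE mulrC /e mulr_natr.
Qed.

Section PolyDivisibility.
Variable K : fieldType.
Implicit Types f g : {poly K}.

Lemma irredp_dvd_prod (I : finType) (F : I -> {poly K}) f :
  irreducible_poly f -> f %| \prod_i F i -> exists i, f %| F i.
Proof.
move=> irr_f f_dvd; have [/existsP //|/existsPn nF] := boolP [exists i, f %| F i].
suff: coprimep f (\prod_i F i) by rewrite irreducible_poly_coprime // f_dvd.
elim/big_ind: _ => [|p q cp cq|i _]; first exact: coprimep1.
  by rewrite coprimepMr cp.
by rewrite irreducible_poly_coprime ?nF.
Qed.

Lemma monic_dvdp_irred_exp f g n : irreducible_poly f -> f \is monic ->
  g \is monic -> g %| f ^+ n -> exists2 e, (e <= n)%N & g = f ^+ e.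
Proof.
move=> irr_f mon_f; elim: n g => [|n IH] g mon_g.
  by rewrite expr0 dvdp1 size_poly_eq1 eqp_monic ?monic1 // => /eqP ->; exists 0%N.
rewrite exprS; have [f_dvd_g|f_ndvd_g] := boolP (f %| g); last first.
  rewrite Gauss_dvdpr; last by rewrite coprimep_sym irreducible_poly_coprime.
  by case/IH=> // e le_e_n ->; exists e => //; apply: leqW.
have mon_gf : g %/ f \is monic by rewrite -(monicMr _ mon_f) divpK.
rewrite -(divpK f_dvd_g) [_ * f]mulrC dvdp_mul2l ?irredp_neq0 //.
by case/(IH _ mon_gf) => e le_e_n ->; exists e.+1; rewrite ?exprS.
Qed.

Lemma modp_sum (I : Type) (r : seq I) (P : pred I) (F : I -> {poly K}) d :
  (\sum_(i <- r | P i) F i) %% d = \sum_(i <- r | P i) (F i %% d).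
Proof. by elim/big_rec2: _ => [|i p q _ <-]; rewrite ?mod0p ?modpD. Qed.

End PolyDivisibility.

Section PolyMxDiagonalization.
Variables (K : fieldType) (m : nat).
Local Notation M := 'M[{poly K}]_m.
Implicit Types (A B C : M) (kk : 'I_m) (p q : 'I_m -> {poly K}).

Definition mxequiv A B :=
  exists L R : M, [/\ L \in unitmx, R \in unitmx & B = L *m A *m R].

Lemma mxequiv_refl A : mxequiv A A.
Proof. by exists 1%:M, 1%:M; rewrite unitmx1 mul1mx mulmx1. Qed.

Lemma mxequiv_trans A B C : mxequiv A B -> mxequiv B C -> mxequiv A C.
Proof.
move=> [L1 [R1 [uL1 uR1 ->]]] [L2 [R2 [uL2 uR2 ->]]].
by exists (L2 *m L1), (R1 *m R2); rewrite !unitmx_mul uL1 uR1 uL2 uR2 !mulmxA.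
Qed.

Lemma mxequiv_tr A B : mxequiv A B -> mxequiv A^T B^T.
Proof.
move=> [L [R [uL uR ->]]]; exists R^T, L^T.
by rewrite !unitmx_tr !trmx_mul mulmxA.
Qed.

Lemma mxequiv_swap i1 i2 j1 j2 B : mxequiv B (xrow i1 i2 (xcol j1 j2 B)).
Proof.
exists (tperm_mx i1 i2), (tperm_mx j1 j2).
by rewrite !unitmx_perm xrowE xcolE mulmxA.
Qed.

Lemma unitmx_1B (N : M) : N *m N = 0 -> 1%:M - N \in unitmx.
Proof.
move=> N2; suff: (1%:M - N) *m (1%:M + N) = 1%:M by case/mulmx1_unit.
by rewrite mulmxBl !mulmxDr !mul1mx !mulmx1 N2 addr0 addrK.
Qed.

Definition col_sub kk (q : 'I_m -> {poly K}) B : M :=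
  \matrix_(i, l) (B i l - B i kk * q l).

Definition row_sub kk (p : 'I_m -> {poly K}) B : M := (col_sub kk p B^T)^T.

Lemma row_subE kk p B i l : row_sub kk p B i l = B i l - p i * B kk l.
Proof. by rewrite !mxE mulrC. Qed.

Lemma mxequiv_col_sub kk q B : q kk = 0 -> mxequiv B (col_sub kk q B).
Proof.
move=> qkk0; pose N : M := \matrix_(t, l) ((t == kk)%:R * q l).
have mulN C : C *m N = \matrix_(i, l) (C i kk * q l).
  apply/matrixP => i l; rewrite !mxE (bigD1 kk) //= big1 ?addr0 => [|t /negPf tk].
    by rewrite mxE eqxx mul1r.
  by rewrite mxE tk mul0r mulr0.
exists 1%:M, (1%:M - N); rewrite unitmx1 unitmx_1B; last first.
  by apply/matrixP => i l; rewrite mulN !mxE qkk0 mulr0 mul0r.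
by split => //; apply/matrixP => i l; rewrite mul1mx mulmxBr mulmx1 mulN !mxE.
Qed.

Lemma mxequiv_row_sub kk p B : p kk = 0 -> mxequiv B (row_sub kk p B).
Proof.
by move=> pkk0; have := mxequiv_tr (mxequiv_col_sub B^T pkk0); rewrite trmxK.
Qed.

Definition diag_upto (k : nat) B :=
  forall i j : 'I_m, i != j -> ((i < k) || (j < k))%N -> B i j = 0.

Lemma diag_upto_tr k B : diag_upto k B -> diag_upto k B^T.
Proof. by move=> dB i j ij ijk; rewrite mxE dB // 1?eq_sym // orbC. Qed.

Lemma diag_upto_swap kk (i0 j0 : 'I_m) B : (kk <= i0)%N -> (kk <= j0)%N ->
  diag_upto kk B -> diag_upto kk (xrow i0 kk (xcol j0 kk B)).
Proof.
move=> le_i0 le_j0 dB.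
have tpermE (x z : 'I_m) : (kk <= x)%N -> (z < kk)%N -> tperm x kk z = z.
  by move=> le_x lt_z; apply: tpermD; apply: contraTneq lt_z => <-; rewrite -leqNgt.
move=> i j ij /orP [lt_i | lt_j]; rewrite !mxE.
  rewrite (tpermE i0) // dB ?lt_i //; apply: contraNneq ij => /(congr1 (tperm j0 kk)).
  by rewrite tpermK tpermE // => ->.
rewrite (tpermE j0) // dB ?lt_j ?orbT //; apply: contraNneq ij => ij.
by rewrite -(tpermK i0 kk i) ij tpermE.
Qed.

Lemma diag_upto_col_sub kk q B : diag_upto kk B ->
  (forall j : 'I_m, (j < kk)%N -> q j = 0) -> diag_upto kk (col_sub kk q B).
Proof.
move=> dB q0 i j ij ijk; rewrite mxE dB //.
case/orP: ijk => [lt_i|lt_j]; last by rewrite q0 ?mulr0 ?subr0.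
by rewrite dB ?lt_i ?mul0r ?subr0 //; apply: contraTneq lt_i => ->; rewrite ltnn.
Qed.

Lemma diag_upto_row_sub kk p B : diag_upto kk B ->
  (forall i : 'I_m, (i < kk)%N -> p i = 0) -> diag_upto kk (row_sub kk p B).
Proof. by move=> dB p0; apply/diag_upto_tr/diag_upto_col_sub/p0/diag_upto_tr. Qed.

Lemma diag_upto_reduce kk B : diag_upto kk B -> B kk kk != 0 ->
  exists2 B', mxequiv B B' &
    [/\ diag_upto kk B', B' kk kk = B kk kk &
        forall x, x != kk -> B' x kk = B x kk %% B kk kk /\
                             B' kk x = B kk x %% B kk kk].
Proof.
move=> dB nz_a; set a := B kk kk.
have lt_kk (x : 'I_m) : (x < kk)%N -> x != kk by apply: contraTneq => ->; rewrite ltnn.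
pose q l := if l == kk then 0 else B kk l %/ a.
pose C := col_sub kk q B.
have C_kk x : C x kk = B x kk by rewrite mxE /q eqxx mulr0 subr0.
pose p i := if i == kk then 0 else C i kk %/ a.
have q0 : q kk = 0 by rewrite /q eqxx.
have p0 : p kk = 0 by rewrite /p eqxx.
exists (row_sub kk p C).
  exact: mxequiv_trans (mxequiv_col_sub B q0) (mxequiv_row_sub C p0).
have dC : diag_upto kk C.
  apply: (diag_upto_col_sub dB) => j lt_j.
  by rewrite /q (negPf (lt_kk _ lt_j)) dB ?div0p ?lt_j ?orbT // eq_sym lt_kk.
split => [||x xk].
- apply: (diag_upto_row_sub dC) => i lt_i.
  by rewrite /p (negPf (lt_kk _ lt_i)) C_kk dB ?div0p ?lt_i ?lt_kk.
- by rewrite row_subE /p eqxx mul0r subr0 C_kk.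
rewrite !row_subE /p (negPf xk) eqxx mul0r subr0 !C_kk mxE /q (negPf xk).
have modE r : r - r %/ a * a = r %% a by rewrite {1}(divp_eq r a) addrAC subrr add0r.
by rewrite -/a [a * _]mulrC !modE.
Qed.

Lemma diag_uptoS kk B : diag_upto kk B ->
  (forall x, x != kk -> B x kk = 0 /\ B kk x = 0) -> diag_upto kk.+1 B.
Proof.
move=> dB clear_kk i j ij.
have [eik | ik] := eqVneq i kk.
  by rewrite eik eq_sym in ij *; case: (clear_kk j ij).
have [ejk | jk] := eqVneq j kk; first by rewrite ejk in ij *; case: (clear_kk i ij).
have lt_kk x : x != kk -> (x < kk.+1)%N -> (x < kk)%N.
  move=> xk; rewrite ltnS leq_eqVlt => /orP [/eqP/val_inj/eqP | //].
  by rewrite (negPf xk).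
by case/orP => [/(lt_kk _ ik) | /(lt_kk _ jk)] lt_x; apply: dB; rewrite ?lt_x ?orbT.
Qed.

(* Induction on the size of the pivot: after reduction, a nonzero entry left
   in row or column kk is a remainder modulo the pivot, hence smaller. *)
Lemma diag_upto_pivot kk B (i0 j0 : 'I_m) : diag_upto kk B ->
  (kk <= i0)%N -> (kk <= j0)%N -> B i0 j0 != 0 ->
  exists2 B', mxequiv B B' & diag_upto kk.+1 B'.
Proof.
move=> dB le_i0 le_j0 nz; have [s] := ubnP (size (B i0 j0)).
elim: s => // s IH in B dB i0 j0 le_i0 le_j0 nz *; rewrite ltnS => le_s.
set B1 := xrow i0 kk (xcol j0 kk B).
have B1_kk : B1 kk kk = B i0 j0 by rewrite !mxE !tpermR.
have nz_B1 : B1 kk kk != 0 by rewrite B1_kk.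
have [B2 eqv_B2 [dB2 _ B2_rem]] :=
  diag_upto_reduce (diag_upto_swap le_i0 le_j0 dB) nz_B1.
have {}eqv_B2 : mxequiv B B2 by apply: mxequiv_trans eqv_B2; apply: mxequiv_swap.
have small (r : {poly K}) : (size (r %% B1 kk kk)%R < s)%N.
  by rewrite B1_kk; apply: leq_trans (ltn_modpN0 r nz) le_s.
have [x /andP [xk nz_x] | clear_kk] :=
  pickP (fun x => (x != kk) && ((B2 x kk != 0) || (B2 kk x != 0))); last first.
  exists B2 => //; apply: diag_uptoS => // x xk.
  by move/negbT: (clear_kk x); rewrite xk negb_or !negbK => /andP [/eqP -> /eqP ->].
have le_x : (kk <= x)%N.
  rewrite leqNgt; apply: contraTN nz_x => lt_x.
  by rewrite negb_or !negbK !dB2 ?eqxx ?lt_x ?orbT // eq_sym.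
have [B' eqv_B' dB'] : exists2 B', mxequiv B2 B' & diag_upto kk.+1 B'.
  case/orP: nz_x => nz_x.
    by apply: (IH _ dB2 x kk) => //; rewrite (B2_rem x xk).1 small.
  by apply: (IH _ dB2 kk x) => //; rewrite (B2_rem x xk).2 small.
by exists B' => //; apply: mxequiv_trans eqv_B2 eqv_B'.
Qed.

Lemma diag_upto_step kk B : diag_upto kk B ->
  exists2 B', mxequiv B B' & diag_upto kk.+1 B'.
Proof.
move=> dB.
have [[i0 j0] /and3P[] /= le_i0 le_j0 nz | none] :=
  pickP (fun ij : 'I_m * 'I_m =>
    [&& (kk <= ij.1)%N, (kk <= ij.2)%N & B ij.1 ij.2 != 0]).
  exact: diag_upto_pivot dB le_i0 le_j0 nz.
exists B; first exact: mxequiv_refl.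
apply: diag_uptoS => // x xk; have [lt_x | le_x] := ltnP x kk.
  by rewrite !dB ?lt_x ?orbT // eq_sym.
move: (none (x, kk)) (none (kk, x)); rewrite /= le_x leqnn.
by move=> /negbFE/eqP -> /negbFE/eqP ->.
Qed.

Lemma poly_mx_equiv_diag A :
  exists L R : M, [/\ L \in unitmx, R \in unitmx & is_diag_mx (L *m A *m R)].
Proof.
suff [D [L [R [uL uR ->]]] dD] : exists2 D, mxequiv A D & diag_upto m D.
  by exists L, R; split => //; apply/is_diag_mxP => i j ij; rewrite dD ?ltn_ord.
suff: forall k, (k <= m)%N -> exists2 D, mxequiv A D & diag_upto k D by apply.
elim=> [_ | k IH lt_k]; first by exists A; [exact: mxequiv_refl | move=> i j _].
have [D eqv_D dD] := IH (ltnW lt_k).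
have [D' eqv_D' dD'] := diag_upto_step (kk := Ordinal lt_k) dD.
by exists D' => //; apply: mxequiv_trans eqv_D eqv_D'.
Qed.

End PolyMxDiagonalization.

Lemma trig_row_eq0 (R : idomainType) n (A : 'M[{poly R}]_n) (r : 'rV_n) :
  is_trig_mx A -> (forall l, size ((r *m A) 0%R l) < size (A l l))%N -> r = 0.
Proof.
move=> /is_trig_mxP trA small; apply/rowP => l0; rewrite mxE; apply/eqP.
apply: contraT => nz0.
case: (@arg_maxnP _ l0 (fun l => r 0 l != 0) val nz0) => l nz lmax.
have rA : (r *m A) 0 l = r 0 l * A l l.
  rewrite mxE (bigD1 l) //= big1 ?addr0 // => j jl.
  have [lt_jl | lt_lj | /val_inj eq_jl] := ltngtP j l.
  - by rewrite trA ?mulr0.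
  - have /negPn/eqP -> : ~~ (r 0 j != 0).
      by apply/negP => /lmax /=; rewrite leqNgt lt_lj.
    by rewrite mul0r.
  - by move: jl; rewrite eq_jl eqxx.
have nzA : A l l != 0 by apply: contraTneq (small l) => ->; rewrite size_poly0.
have := small l; rewrite rA size_mul //; rewrite -size_poly_gt0 in nz.
by lia.
Qed.

Definition sys_mx (K : fieldType) m (zeta : 'I_m -> {poly K})
    (Q : 'I_m -> 'I_m -> {poly K}) : 'M[{poly K}]_m :=
  \matrix_(k, l) (if l == k then zeta k else if (l < k)%N then - Q k l else 0).

Section SystemMatrix.
Variables (K : fieldType) (m : nat) (zeta : 'I_m -> {poly K})
  (Q : 'I_m -> 'I_m -> {poly K}).

Lemma sys_mx_trig : is_trig_mx (sys_mx zeta Q).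
Proof.
apply/is_trig_mxP => i j lt_ij; rewrite mxE.
by rewrite -val_eqE /= gtn_eqF // ltnNge ltnW.
Qed.

Lemma sys_mx_diag k : sys_mx zeta Q k k = zeta k.
Proof. by rewrite mxE eqxx. Qed.

Lemma sys_mx_act (V : lmodType K) (th : {linear V -> V}) (x y : 'I_m -> V) :
  (forall k, peval th (zeta k) (x k)
             = \sum_(l < m | (l < k)%N) peval th (Q k l) (x l) + y k) <->
  mx_act th (sys_mx zeta Q) x =1 y.
Proof.
have act_sys k : mx_act th (sys_mx zeta Q) x k =
    peval th (zeta k) (x k) - \sum_(l < m | (l < k)%N) peval th (Q k l) (x l).
  rewrite /mx_act /eval_y (bigD1 k) //= mxE eqxx; congr (_ + _).
  rewrite -sumrN big_mkcond [RHS]big_mkcond /=; apply: eq_bigr => l _; rewrite mxE.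
  have [->|lk] := eqVneq l k; first by rewrite ltnn.
  by case: ifP => _; rewrite ?pevalN ?peval0.
split=> sys k; first by rewrite act_sys sys addrAC subrr add0r.
by rewrite -(sys k) act_sys addrC subrK.
Qed.

End SystemMatrix.

Section DiagonalReduction.
Variables (K : fieldType) (m : nat) (zeta : 'I_m -> {poly K}).
Variables (A L R : 'M[{poly K}]_m).
Hypothesis zeta_monic : forall k, zeta k \is monic /\ (0 < pdeg (zeta k))%N.
Hypotheses (A_trig : is_trig_mx A) (A_diag : forall k, A k k = zeta k).
Hypotheses (uL : L \in unitmx) (uR : R \in unitmx).
Hypothesis D_diag : is_diag_mx (L *m A *m R).

Local Notation D := (L *m A *m R).

Definition diag_entry k := D k k.
Definition diag_lc k := lead_coef (diag_entry k).
Definition unit_entry k := size (diag_entry k) == 1%N.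

(* For a unit diagonal entry, x'_k is a dummy variable: tau ignores it and
   its equation zeta_k(x'_k) = zeta_k(Lrow_k(y)) is solvable; choosing zeta_k
   makes both Variations hold trivially for it. *)
Definition xi k := if unit_entry k then zeta k else (diag_lc k)^-1 *: diag_entry k.

Definition Lrow k : yterm K m := fun j => (diag_lc k)^-1 *: L k j.

Definition mu k : yterm K m :=
  fun j => if unit_entry k then zeta k * Lrow k j else Lrow k j.

Definition reduce_term (r : 'I_m -> {poly K}) : xyterm K m m :=
  (fun l => if unit_entry l then 0 else r l %% xi l,
   fun j => \sum_l (if unit_entry l then r l * Lrow l j else (r l %/ xi l) * mu l j)).

Definition tau k i := reduce_term (fun l => 'X^i * R k l).

Lemma det_A : \det A = \prod_k zeta k.
Proof. by rewrite det_trig //; apply: eq_bigr => k _; rewrite A_diag. Qed.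

Lemma prod_diag_entry : \prod_k diag_entry k = \det L * \prod_k zeta k * \det R.
Proof. by rewrite -det_A -!det_mulmx det_trig ?is_diag_mx_is_trig. Qed.

Lemma diag_entry_neq0 k : diag_entry k != 0.
Proof.
have det_neq0 (P : 'M_m) : P \in unitmx -> \det P != 0.
  by rewrite unitmxE; apply: contraTneq => ->; rewrite unitr0.
have : \prod_k diag_entry k != 0.
  rewrite prod_diag_entry !mulf_neq0 ?det_neq0 //.
  by apply/prodf_neq0 => j _; apply: monic_neq0; case: (zeta_monic j).
by move/prodf_neq0; apply.
Qed.

Lemma diag_lc_neq0 k : diag_lc k != 0.
Proof. by rewrite lead_coef_eq0 diag_entry_neq0. Qed.

Lemma diag_entry_unit k : unit_entry k -> diag_entry k = (diag_lc k)%:P.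
Proof.
move=> /eqP size1; have le1 : (size (diag_entry k) <= 1)%N by rewrite size1.
by rewrite {1}(size1_polyC le1) /diag_lc lead_coefE size1.
Qed.

Lemma diag_entry_xi k : ~~ unit_entry k -> diag_entry k = diag_lc k *: xi k.
Proof.
by rewrite /xi => /negPf ->; rewrite scalerA mulfV ?diag_lc_neq0 // scale1r.
Qed.

Lemma xi_monic k : xi k \is monic /\ (0 < pdeg (xi k))%N.
Proof.
rewrite /xi /unit_entry; case: ifP => [_ | size_neq1]; first exact: zeta_monic.
split; first by rewrite monicE lead_coefZ mulVf ?diag_lc_neq0.
rewrite /pdeg size_scale ?invr_eq0 ?diag_lc_neq0 //.
by move: size_neq1 (diag_entry_neq0 k); rewrite -size_poly_gt0; case: size => [|[]].
Qed.

Lemma xi_neq0 k : xi k != 0.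
Proof. by apply: monic_neq0; case: (xi_monic k). Qed.

Section Model.
Variables (V : lmodType K) (th : {linear V -> V}).

Definition reduced_sys (x' y : 'I_m -> V) :=
  forall k, peval th (xi k) (x' k) = eval_y th (mu k) y.

Definition diag_var (x' y : 'I_m -> V) k :=
  if unit_entry k then eval_y th (Lrow k) y else x' k.

Lemma Lrow_act k y : eval_y th (Lrow k) y = (diag_lc k)^-1 *: mx_act th L y k.
Proof. exact: eval_yZ. Qed.

Lemma mu_unit k y : unit_entry k ->
  eval_y th (mu k) y = peval th (zeta k) (eval_y th (Lrow k) y).
Proof. by move=> uk; rewrite -eval_yM; apply: eq_bigr => j _; rewrite /mu uk. Qed.

Lemma mu_nonunit k y : ~~ unit_entry k -> eval_y th (mu k) y = eval_y th (Lrow k) y.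
Proof. by move=> /negPf uk; apply: eq_bigr => j _; rewrite /mu uk. Qed.

Lemma diag_eqP z y k :
  peval th (diag_entry k) (z k) = mx_act th L y k <->
  peval th (xi k) (z k) = eval_y th (mu k) y /\ diag_var z y k = z k.
Proof.
have lc_nz := diag_lc_neq0 k; rewrite /diag_var.
have [uk | nuk] := boolP (unit_entry k).
  rewrite /xi uk mu_unit // diag_entry_unit // pevalC Lrow_act.
  by split => [<- | [_ <-]]; rewrite ?scalerK ?scalerKV.
rewrite /= mu_nonunit // diag_entry_xi // pevalZ Lrow_act.
by split => [<- | [-> _]]; rewrite ?scalerK ?scalerKV.
Qed.

Lemma diag_sysP z y : mx_act th D z =1 mx_act th L y <->
  reduced_sys z y /\ diag_var z y =1 z.
Proof.
split => [eqD | [red dz] k]; last by rewrite mx_act_diag //; apply/diag_eqP.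
have eq_k k : peval th (diag_entry k) (z k) = mx_act th L y k.
  by rewrite -eqD mx_act_diag.
by split => k; have /diag_eqP [] := eq_k k.
Qed.

Lemma eval_reduce_term r x' y : reduced_sys x' y ->
  eval_xy th (reduce_term r) x' y = \sum_l peval th (r l) (diag_var x' y l).
Proof.
move=> red; rewrite /eval_xy /eval_y /=.
under [X in _ + X]eq_bigr => j _ do rewrite peval_sum.
rewrite exchange_big -big_split /=; apply: eq_bigr => l _; rewrite /diag_var.
have [_ | _] := ifPn; first by rewrite peval0 add0r -eval_yM.
rewrite -/(eval_y th (fun j => r l %/ xi l * mu l j) y) eval_yM -red -pevalM.
by rewrite -pevalD addrC -divp_eq.
Qed.

Lemma eval_tau x' y k i : reduced_sys x' y ->
  eval_xy th (tau k i) x' y = iter i th (mx_act th R (diag_var x' y) k).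
Proof.
move=> red; rewrite eval_reduce_term // -peval_Xn linear_sum.
by apply: eq_bigr => l _; rewrite pevalM.
Qed.

Lemma reduced_sysP x y : mx_act th A x =1 y <->
  exists x', reduced_sys x' y /\ forall k, x k = eval_xy th (tau k 0) x' y.
Proof.
split => [eqA | [x' [red eq_x]]].
  pose z := mx_act th (invmx R) x.
  have Rz : mx_act th R z =1 x by move=> k; rewrite -mx_act_mul mulmxV // mx_act1.
  have /diag_sysP [red dz] : mx_act th D z =1 mx_act th L y.
    by apply/mx_act_unitmxE => // k; rewrite (mx_act_ext _ _ Rz).
  by exists z; split => // k; rewrite eval_tau //= (mx_act_ext _ _ dz) Rz.
set z := diag_var x' y.
have eqD : mx_act th D z =1 mx_act th L y.
  apply/diag_sysP; split => k; rewrite /z /diag_var; last by case: (unit_entry k).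
  by case: ifP => uk; [rewrite /xi uk mu_unit | apply: red].
have Rz : x =1 mx_act th R z by move=> k; rewrite eq_x eval_tau.
by move=> k; rewrite (mx_act_ext _ _ Rz); exact: (mx_act_unitmxE th A R z y uL).1 eqD k.
Qed.

End Model.

Lemma tau_coef_small k i l j : (pdeg (xi k) <= i)%N -> ((tau l j).1 k)`_i = 0.
Proof.
rewrite /tau /=; case: ifP => _ le_xi_i; first by rewrite coef0.
apply: nth_default; rewrite -ltnS; apply: leq_trans (ltn_modpN0 _ (xi_neq0 k)) _.
by move: le_xi_i; rewrite /pdeg; case: size.
Qed.

Lemma tau_indep (c : 'I_m -> nat -> K) :
  (forall l, \sum_k \sum_(i < pdeg (zeta k)) c k i *: (tau k i).1 l = 0) ->
  forall k i, (i < pdeg (zeta k))%N -> c k i = 0.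
Proof.
(* The coefficients form a row p of polynomials of degree < deg zeta_k with
   p R = e D for some row e; then p = (e L) A, and the degree bound forces
   e L = 0 because A is triangular with diagonal zeta. *)
move=> comb0.
pose p : 'rV_m := \row_k \poly_(i < pdeg (zeta k)) c k i.
have dvd_pR l : diag_entry l %| (p *m R) 0 l.
  have [ul | nul] := boolP (unit_entry l).
    by apply: dvdUp; rewrite -size_poly_eq1.
  rewrite diag_entry_xi // dvdpZl ?diag_lc_neq0 //; apply/modp_eq0P.
  rewrite -(comb0 l) mxE modp_sum; apply: eq_bigr => k _.
  rewrite /tau /= (negPf nul) mxE poly_def mulr_suml modp_sum.
  by apply: eq_bigr => i _; rewrite -scalerAl modpZl.
pose e : 'rV_m := \row_l ((p *m R) 0 l %/ diag_entry l).
have pR : p *m R = e *m D.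
  apply/rowP => l; rewrite [RHS]mxE (bigD1 l) //= big1 ?addr0 => [|j jl].
    by rewrite [e _ _]mxE divpK.
  by rewrite (is_diag_mxP D_diag) ?mulr0.
have p_eq : p = e *m L *m A by rewrite -(mulmxK uR p) pR !mulmxA mulmxK.
have eL0 : e *m L = 0.
  apply: (@trig_row_eq0 K _ A) => // l; rewrite -p_eq A_diag mxE.
  apply: leq_ltn_trans (size_poly _ _) _.
  by rewrite /pdeg ltn_predL size_poly_gt0 monic_neq0 //; case: (zeta_monic l).
move=> k i lt_i; have := congr1 (fun P : 'rV[{poly K}]_m => (P 0 k)`_i) p_eq.
by rewrite eL0 mul0mx !mxE coef_poly lt_i coef0.
Qed.

Lemma xi_irred_factor k f : irreducible_poly f -> f %| xi k -> exists j, f %| zeta j.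
Proof.
move=> irr_f; have [uk | nuk] := boolP (unit_entry k).
  by rewrite /xi uk; exists k.
rewrite /xi (negPf nuk) dvdpZr ?invr_eq0 ?diag_lc_neq0 // => f_dvd.
apply: irredp_dvd_prod => //.
have : f %| \prod_j diag_entry j by rewrite (bigD1 k) //= dvdp_mulr.
have det1 (P : 'M_m) : P \in unitmx -> \det P %= 1.
  by rewrite unitmxE poly_unitE size_poly_eq1 => /andP [].
have dvd_unitl (u p : {poly K}) : u %= 1 -> (f %| u * p) = (f %| p).
  by move=> u1; rewrite (eqp_dvdr _ (eqp_mulr _ u1)) mul1r.
by rewrite prod_diag_entry mulrC !dvd_unitl ?det1.
Qed.

Lemma diag_cofactor (T : 'M_m) (g : {poly K}) : T *m A = g%:M ->
  forall k, exists h, h * diag_entry k = g /\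
    forall (V : lmodType K) (th : {linear V -> V}) (u : 'I_m -> V),
      mx_act th T u =1 (fun=> 0) -> peval th h (mx_act th L u k) = 0.
Proof.
move=> TA k; pose E := invmx R *m T *m invmx L.
have ED : E *m D = g%:M.
  by rewrite !mulmxA mulmxKV // -(mulmxA (invmx R)) TA scalar_mxC mulmxKV.
have ED_entry i j : E i j * diag_entry j = g *+ (i == j).
  have := congr1 (fun M : 'M_m => M i j) ED.
  rewrite /= [LHS]mxE [RHS]mxE (bigD1 j) //= big1 ?addr0 => [<- // | l lj].
  by rewrite (is_diag_mxP D_diag) ?mulr0.
have E_diag : is_diag_mx E.
  apply/is_diag_mxP => i j /negPf ij; have /eqP := ED_entry i j.
  by rewrite [i == j]ij mulr0n mulf_eq0 (negPf (diag_entry_neq0 j)) orbF => /eqP.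
exists (E k k); split; first by rewrite ED_entry eqxx.
move=> V th u Tu0; rewrite -(mx_act_diag _ _ E_diag) -mx_act_mul /E.
by rewrite mulmxKV // mx_act_mul (mx_act_ext _ _ Tu0) mx_act0.
Qed.

Lemma xi_pow_annihilates (f : {poly K}) (N : nat) (q : 'I_m -> nat)
    (t : 'I_m -> yterm K m) :
  irreducible_poly f -> f \is monic ->
  (forall k, zeta k = f ^+ q k /\ (0 < q k <= N)%N) ->
  (forall (V : lmodType K) (th : {linear V -> V}) (x y : 'I_m -> V),
     mx_act th A x =1 y -> forall k, peval th (f ^+ N) (x k) = eval_y th (t k) y) ->
  forall k, exists e, (xi k = f ^+ e /\ (0 < e <= N)%N) /\
    forall (V : lmodType K) (th : {linear V -> V}) (u : 'I_m -> V),
      (forall k, peval th (f ^+ N) (u k) = 0) -> (forall k, eval_y th (t k) u = 0) ->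
      peval th (f ^+ (N - e)) (eval_y th (mu k) u) = 0.
Proof.
move=> irr_f mon_f zeta_pow act_t k.
pose T : 'M_m := \matrix_(k, l) t k l.
have actT (V : lmodType K) (th : {linear V -> V}) y :
    mx_act th T y =1 (fun k => eval_y th (t k) y).
  by move=> j; apply: eq_bigr => l _; rewrite mxE.
have TA : T *m A = (f ^+ N)%:M.
  by apply: scalar_mulmx_of_act => V th x y /act_t act_f j; rewrite act_f actT.
have [h [h_d h_ann]] := diag_cofactor TA k.
have [uk | nuk] := boolP (unit_entry k).
  have [zq /andP [q_gt0 q_le]] := zeta_pow k.
  exists (q k); split; first by rewrite /xi uk zq q_gt0 q_le.
  move=> V th u fu _; rewrite mu_unit // zq -pevalM -exprD subnK // peval_eval_y.
  by rewrite /eval_y big1 // => l _; rewrite fu linear0.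
have xi_dvd : xi k %| f ^+ N.
  by rewrite -h_d diag_entry_xi // -scalerAr dvdpZr ?diag_lc_neq0 // dvdp_mull.
have [e le_eN xi_e] := monic_dvdp_irred_exp irr_f mon_f (xi_monic k).1 xi_dvd.
exists e; split.
  split => //; rewrite le_eN andbT lt0n; apply: contraTneq (xi_monic k).2 => e0.
  by rewrite xi_e e0 expr0 /pdeg size_poly1.
move=> V th u _ tu.
have cofactor : diag_lc k *: h = f ^+ (N - e).
  apply: (@mulIf _ (f ^+ e)); first by rewrite expf_neq0 ?irredp_neq0.
  by rewrite -exprD subnK // -scalerAl -xi_e scalerAr -diag_entry_xi.
rewrite -cofactor pevalZ mu_nonunit // Lrow_act linearZ /= scalerA.
by rewrite mulfV ?diag_lc_neq0 // scale1r h_ann // => j; rewrite actT tu.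
Qed.

End DiagonalReduction.

Theorem lemma4p19 (K : fieldType) (m : nat)
    (zeta : 'I_m -> {poly K}) (Q : 'I_m -> 'I_m -> {poly K})
    (Hzeta : forall k, zeta k \is monic /\ (0 < pdeg (zeta k))%N)
    (HQ : forall k l : 'I_m, (l < k)%N -> (size (Q k l) < size (zeta l))%N) :
  let sys := fun (V : lmodType K) (th : {linear V -> V}) (x y : 'I_m -> V) =>
    forall k : 'I_m,
      peval th (zeta k) (x k)
      = \sum_(l < m | (l < k)%N) peval th (Q k l) (x l) + y k in
  exists (n : nat) (xi : 'I_n -> {poly K}) (mu : 'I_n -> yterm K m)
         (tau : 'I_m -> nat -> xyterm K n m),
  let sys' := fun (V : lmodType K) (th : {linear V -> V}) (x' : 'I_n -> V)
                  (y : 'I_m -> V) =>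
    forall k : 'I_n, peval th (xi k) (x' k) = eval_y th (mu k) y in
  (
   (* (a) *)
   (forall k, xi k \is monic /\ (0 < pdeg (xi k))%N) /\
   (* (b)(1) linear independence of tau^i_k(x'; 0), i < deg zeta_k *)
   (forall c : 'I_m -> nat -> K,
      (forall l : 'I_n,
         \sum_(k < m) \sum_(i < pdeg (zeta k)) c k i *: (tau k i).1 l = 0) ->
      forall (k : 'I_m) (i : nat), (i < pdeg (zeta k))%N -> c k i = 0) /\
   (* (b)(2) theta^i(x'_k), i >= deg xi_k, does not occur in tau^j_l, j < deg zeta_l *)
   (forall (k : 'I_n) (i : nat) (l : 'I_m) (j : nat),
      (pdeg (xi k) <= i)%N -> (j < pdeg (zeta l))%N -> ((tau l j).1 k)`_i = 0) /\
   (* (i) *)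
   (forall (V : lmodType K) (th : {linear V -> V}) (x y : 'I_m -> V),
      sys V th x y <->
      exists x' : 'I_n -> V,
        sys' V th x' y /\ forall k, x k = eval_xy th (tau k 0%N) x' y) /\
   (* (ii) *)
   (forall (V : lmodType K) (th : {linear V -> V}) (x' : 'I_n -> V)
           (y : 'I_m -> V),
      sys' V th x' y ->
      forall (k : 'I_m) (i : nat),
        eval_xy th (tau k i) x' y = iter i th (eval_xy th (tau k 0%N) x' y)) /\
   (* Variation 1 *)
   (forall C : kconf K, kconf_ok C ->
      (forall (k : 'I_m) f, mirr f -> f %| zeta k -> kc_c C f = None) ->
      forall (k : 'I_n) f, mirr f -> f %| xi k -> kc_c C f = None) /\
   (* Variation 2 *)
   (forall (C : kconf K) (f : {poly K}) (N : nat) (q : 'I_m -> nat)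
           (t : 'I_m -> yterm K m),
      kconf_ok C -> mirr f -> kc_c C f = Some N -> (0 < N)%N ->
      (forall k, zeta k = f ^+ q k /\ (0 < q k <= N)%N) ->
      (forall (V : lmodType K) (th : {linear V -> V}) (x y : 'I_m -> V),
         sys V th x y -> forall k, peval th (f ^+ N) (x k) = eval_y th (t k) y) ->
      exists q' : 'I_n -> nat,
        (forall k, xi k = f ^+ q' k /\ (0 < q' k <= N)%N) /\
        forall (V : lmodType K) (th : {linear V -> V}) (u : 'I_m -> V),
          (forall k, peval th (f ^+ N) (u k) = 0) ->
          (forall k, eval_y th (t k) u = 0) ->
          forall k : 'I_n, peval th (f ^+ (N - q' k)) (eval_y th (mu k) u) = 0)).
Proof.
move=> sys; set A := sys_mx zeta Q.
have A_trig : is_trig_mx A := sys_mx_trig zeta Q.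
have A_diag : forall k, A k k = zeta k := sys_mx_diag zeta Q.
have sysE (V : lmodType K) (th : {linear V -> V}) x y :
  sys V th x y <-> mx_act th A x =1 y := sys_mx_act zeta Q th x y.
have [L [R [uL uR D_diag]]] := poly_mx_equiv_diag A.
exists m, (xi zeta A L R), (mu zeta A L R), (tau zeta A L R) => sys'.
split; first by apply: xi_monic.
split; first by apply: tau_indep.
split; first by move=> k i l j le_i _; apply: tau_coef_small.
split; first by move=> V th x y; rewrite sysE; apply: reduced_sysP.
split; first by move=> V th x' y red k i; rewrite !eval_tau.
split.
  move=> C _ zeta_inf k f [mon_f irr_f] f_xi.
  have [j f_zeta] := xi_irred_factor Hzeta A_trig A_diag uL uR D_diag irr_f f_xi.
  exact: zeta_inf f_zeta.
move=> C f N q t _ [mon_f irr_f] _ _ zeta_pow act_t.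
have act_tA V th x y := act_t V th x y \o (sysE V th x y).2.
have [q' hq'] := fin_all_exists
  (xi_pow_annihilates Hzeta A_trig A_diag uL uR D_diag irr_f mon_f zeta_pow act_tA).
exists q'; split => [k | V th u fu tu k]; first exact: (hq' k).1.
exact: (hq' k).2 V th u fu tu.
Qed.
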